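(* Let $i,j$ be positive integers with $i\mid j$, and write $i=uv$, where $v$ is the largest divisor of $i$ coprime with $j/i$. Let $C_j$ be a cyclic group of order $j$ and $C_i$ its (unique) subgroup of order $i$. Then (1) every element of a generating coset of $C_j/C_i$ has order divisible by $j/v$; (2) if $d\mid v$, then the number of elements of order $jd/v$ in a generating coset of $C_j/C_i$ is $u\,\phi(d)$, where $\phi$ is Euler's totient function.
   Context: A generating coset of $C_j/C_i$ is a coset of $C_i$ in $C_j$ which generates the quotient group $C_j/C_i$. *)

From mathcomp Require Import all_boot all_order all_fingroup all_solvable.
Set Implicit Arguments. Unset Strict Implicit. Unset Printing Implicit Defensive.
Local Open Scope group_scope.

Definition vpart (i j : nat) : nat :=
  \max_(d < i.+1 | (d %| i) && coprime d (j %/ i)) d.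

Definition generating_coset (gT : finGroupType) (G H : {group gT})
  (C : {set gT}) : Prop :=
  exists2 x, x \in G & C = H :* x /\ generator (G / H) (coset H x).

Set Warnings "-notation-overridden".
From mathcomp Require Import all_boot all_order all_fingroup all_solvable.

Set Implicit Arguments.
Unset Strict Implicit.
Unset Printing Implicit Defensive.

(* Write G = <[g]> and m = j / i, so that H = <[g ^+ m]> and a generating coset
   is H g^a with a coprime to m; its elements are the g^(m k + a), k < i, of
   order j / gcd(j, m k + a).  Every prime factor of u divides m, so m k + a is
   coprime to m u and that gcd is gcd(v, m k + a), a divisor of v: this is (1).
   As k runs over the i = u v values, m k + a runs u times over all residues
   modulo v (m is invertible modulo v), and exactly totient d residues r satisfy
   gcd(v, r) = v / d: this is (2). *)

Lemma sum_nat_mul_blocks n k (F : nat -> nat) :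
  \sum_(0 <= i < n * k) F i = \sum_(0 <= s < n) \sum_(0 <= t < k) F (s * k + t).
Proof.
rewrite big_nat_mul; apply: eq_bigr => s _.
rewrite -{1}[s * k]add0n big_addn mulSnr addKn; apply: eq_bigr => t _.
by rewrite addnC.
Qed.

Lemma eqn_mod_coprime_mul2l d m x y :
  coprime d m -> (m * x == m * y %[mod d]) = (x == y %[mod d]).
Proof.
move=> co_dm; wlog le_yx : x y / y <= x.
  by move=> W; case/orP: (leq_total y x) => /W //; rewrite eq_sym [RHS]eq_sym.
by rewrite !eqn_mod_dvd ?leq_mul2l ?le_yx ?orbT // -mulnBr Gauss_dvdr.
Qed.

Section Periodic.

Variables (k : nat) (F : nat -> nat).
Hypothesis F_per : forall i, F (i + k) = F i.

Lemma periodic_addMn i q : F (q * k + i) = F i.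
Proof. by elim: q => [|q IHq]; rewrite ?add0n // mulSnr addnAC F_per. Qed.

Lemma periodic_modn i : F (i %% k) = F i.
Proof. by rewrite {2}(divn_eq i k) periodic_addMn. Qed.

Lemma sum_nat_periodic n :
  \sum_(0 <= i < n * k) F i = n * \sum_(0 <= i < k) F i.
Proof.
rewrite sum_nat_mul_blocks -[n in RHS]subn0 -sum_nat_const_nat.
by apply: eq_bigr => s _; apply: eq_bigr => t _; rewrite periodic_addMn.
Qed.

Lemma sum_nat_periodic_affine m a :
  coprime k m -> \sum_(0 <= t < k) F (m * t + a) = \sum_(0 <= r < k) F r.
Proof.
move=> co_km; have [->|k_gt0] := posnP k; first by rewrite !big_geq.
pose h (t : 'I_k) : 'I_k := Ordinal (ltn_pmod (m * t + a) k_gt0).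
have inj_h : injective h.
  move=> t t' /(congr1 val) /eqP /=.
  rewrite eqn_modDr eqn_mod_coprime_mul2l // !modn_small // => /eqP.
  exact: val_inj.
rewrite !big_mkord [RHS](reindex_inj inj_h); apply: eq_bigr => t _.
by rewrite /= periodic_modn.
Qed.

End Periodic.

Lemma sum_gcdn_eq_totient c d :
  0 < c -> \sum_(0 <= r < c * d) (gcdn (c * d) r == c) = totient d.
Proof.
move=> c_gt0; rewrite totient_count_coprime mulnC sum_nat_mul_blocks.
(* In the block of s only r = s * c can have gcd c with d * c. *)
apply: eq_bigr => s _; rewrite big_ltn // addn0 big_nat big1 ?addn0.
  by rewrite -muln_gcdl -{2}(mul1n c) eqn_pmul2r.
move=> t /andP [t_gt0 lt_tc]; apply/eqP; rewrite eqb0; apply/eqP => gcd_c.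
have : c %| s * c + t by rewrite -{1}gcd_c dvdn_gcdr.
by rewrite dvdn_addr ?dvdn_mull // => /(dvdn_leq t_gt0); rewrite leqNgt lt_tc.
Qed.

Lemma sum_gcdn_affine_eq_totient u v m a d :
  0 < v -> coprime v m -> d %| v ->
  \sum_(0 <= k < u * v) (gcdn v (m * k + a) == v %/ d) = u * totient d.
Proof.
move=> v_gt0 co_vm dv_dv.
rewrite sum_nat_periodic => [|k]; last first.
  by rewrite mulnDr -addnA addnCA gcdnMDl.
rewrite (@sum_nat_periodic_affine v (fun r => gcdn v r == v %/ d)) => [|r|//].
  have d_gt0 : 0 < d := dvdn_gt0 v_gt0 dv_dv.
  by rewrite -{1 2}(divnK dv_dv) sum_gcdn_eq_totient // divn_gt0 // dvdn_leq.
by rewrite gcdnDr.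
Qed.

Lemma divn_chain j v e : e %| v -> v %| j -> j %/ e = j %/ v * (v %/ e).
Proof. by move=> dv_ev dv_vj; rewrite muln_divA // divnK. Qed.

Lemma eqn_divn_swap j v e d : 0 < j -> v %| j -> e %| v -> d %| v ->
  (j %/ e == j * d %/ v) = (e == v %/ d).
Proof.
move=> j_gt0 dv_vj dv_ev dv_dv; have v_gt0 := dvdn_gt0 j_gt0 dv_vj.
have e_gt0 := dvdn_gt0 v_gt0 dv_ev; have d_gt0 := dvdn_gt0 v_gt0 dv_dv.
rewrite (divn_chain dv_ev dv_vj) -divn_mulAC // eqn_pmul2l; last first.
  by rewrite divn_gt0 // dvdn_leq.
by rewrite eq_sym (eqn_div _ e_gt0) // (eqn_div _ d_gt0) // mulnC.
Qed.

Lemma card_ord_sum n (P : pred nat) :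
  #|[set k : 'I_n | P k]| = \sum_(0 <= k < n) P k.
Proof.
rewrite big_mkord -sum1_card big_mkcond; apply: eq_bigr => k _.
by rewrite inE; case: (P k).
Qed.

Lemma card_setId_imset (aT rT : finType) (f : aT -> rT) (P : pred rT) :
  injective f -> #|[set y in [set f x | x : aT] | P y]| = #|[set x | P (f x)]|.
Proof.
move=> inj_f; rewrite -(card_imset _ inj_f); apply: eq_card => y.
rewrite inE; apply/andP/imsetP => [[/imsetP [x _ ->] Px]|[x]].
  by exists x; rewrite ?inE.
by rewrite inE => Px ->; rewrite imset_f.
Qed.

Lemma vpart_spec i j : 0 < i ->
  [/\ 0 < vpart i j, vpart i j %| i, coprime (vpart i j) (j %/ i) &
      forall p, prime p -> p %| i %/ vpart i j -> p %| j %/ i].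
Proof.
move=> i_gt0; set P := fun d : 'I_i.+1 => (d %| i) && coprime d (j %/ i).
have P_gt0 : 0 < #|P|.
  apply/card_gt0P; exists (Ordinal (i_gt0 : 1 < i.+1)).
  by rewrite unfold_in /P dvd1n coprime1n.
have [v /andP [dv_vi co_v] def_v] := @eq_bigmax_cond _ P (fun d => d : nat) P_gt0.
rewrite -/(vpart i j) in def_v; rewrite def_v in dv_vi co_v *.
have v_gt0 : 0 < v := dvdn_gt0 i_gt0 dv_vi.
split=> // p p_pr dv_p; apply: contraT => ndv_p.
have dv_pv : p * v %| i by rewrite -{2}(divnK dv_vi) dvdn_mul.
have lt_pv : p * v < i.+1 := dvdn_leq i_gt0 dv_pv.
have := @leq_bigmax_cond _ P (fun d => d : nat) (Ordinal lt_pv).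
rewrite /P /= dv_pv coprimeMl prime_coprime // ndv_p co_v -/(vpart i j) def_v.
move=> /(_ isT).
by rewrite -{2}(mul1n v) leq_pmul2r // leqNgt prime_gt1.
Qed.

Lemma coprime_prime_support n m u : 0 < u ->
  (forall p, prime p -> p %| u -> p %| m) -> coprime n m -> coprime n u.
Proof.
move=> u_gt0 u_m co_nm; apply: contraT => nco_nu.
have gt1 : 1 < gcdn n u by rewrite ltn_neqAle eq_sym nco_nu gcdn_gt0 u_gt0 orbT.
set p := pdiv (gcdn n u).
have dv_pn : p %| n := dvdn_trans (pdiv_dvd _) (dvdn_gcdl _ _).
have dv_pu : p %| u := dvdn_trans (pdiv_dvd _) (dvdn_gcdr _ _).
have : p %| gcdn n m by rewrite dvdn_gcd dv_pn u_m ?pdiv_prime.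
by rewrite (eqP co_nm) dvdn1 => /eqP p1; move: (pdiv_prime gt1); rewrite -/p p1.
Qed.

Lemma gcdn_prime_support m u v n : 0 < u ->
  (forall p, prime p -> p %| u -> p %| m) -> coprime n m ->
  gcdn (m * u * v) n = gcdn v n.
Proof.
move=> u_gt0 u_m co_nm; rewrite gcdnC Gauss_gcdr 1?gcdnC //.
by rewrite coprimeMr co_nm (coprime_prime_support u_gt0 u_m co_nm).
Qed.

Local Open Scope group_scope.

Section CyclicCosets.

Variable gT : finGroupType.
Implicit Types (g : gT) (G H : {group gT}).

Lemma cycle_subgroupE g H : H \subset <[g]> -> H :=: <[g ^+ (#[g] %/ #|H|)]>.
Proof.
move=> sHg; have := cycle_sub_group (cardSg sHg).
by move/setP/(_ H); rewrite !inE sHg eqxx => /esym/eqP/(congr1 val).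
Qed.

Lemma generating_coset_cycle g G H C : G :=: <[g]> -> H \subset G ->
  generating_coset G H C -> exists2 a, coprime a #|G : H| & C = H :* g ^+ a.
Proof.
move=> defG sHG [x Gx [-> gen_x]].
have nHG : G \subset 'N(H) by rewrite sub_abelian_norm // defG cycle_abelian.
have Ng : g \in 'N(H) by apply: (subsetP nHG); rewrite defG cycle_id.
move: Gx gen_x; rewrite defG => /cycleP [a ->].
rewrite quotient_cycle // morphX // generator_coprime coprime_sym => co_a.
by exists a; rewrite // -card_quotient ?quotient_cycle // -defG.
Qed.

Lemma rcoset_cycleX g m a n : #[g ^+ m] = n ->
  <[g ^+ m]> :* g ^+ a = [set g ^+ (m * k + a) | k : 'I_n].
Proof.
move=> <-; apply/setP => y.
apply/rcosetP/imsetP => [[h /cyclePmin [k lt_k ->] ->]|].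
  by exists (Ordinal lt_k); rewrite // expgD expgM.
by case=> k _ ->; exists ((g ^+ m) ^+ k); rewrite ?mem_cycle // expgD expgM.
Qed.

Lemma expg_affine_inj g m a n : 0 < m -> #[g] = (m * n)%N ->
  injective (fun k : 'I_n => g ^+ (m * k + a)).
Proof.
move=> m_gt0 og k k' /eqP; rewrite eq_expg_mod_order og eqn_modDr.
by rewrite -!muln_modr eqn_pmul2l // !modn_small // => /eqP /val_inj.
Qed.

End CyclicCosets.

Theorem lemma3p1 (gT : finGroupType) (G H : {group gT}) (i j : nat) :
  0 < i -> 0 < j -> i %| j ->
  cyclic G -> #|G| = j -> H \subset G -> #|H| = i ->
  let v := vpart i j in
  let u := i %/ v in
  (forall C : {set gT}, generating_coset G H C ->
     forall y, y \in C -> (j %/ v) %| #[y]) /\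
  (forall d, d %| v -> forall C : {set gT}, generating_coset G H C ->
     #|[set y in C | #[y] == (j * d %/ v)%N]| = (u * totient d)%N).
Proof.
move=> i_gt0 j_gt0 dv_ij cycG oG sHG oH v u.
have [v_gt0 dv_vi co_vm u_m] := vpart_spec j i_gt0; rewrite -/v -/u in u_m.
set m := j %/ i in co_vm u_m.
have m_gt0 : 0 < m by rewrite divn_gt0 // dvdn_leq.
have def_j : j = (m * u * v)%N by rewrite -mulnA !divnK.
have [g defG] := cyclicP cycG.
have og : #[g] = j by rewrite -oG defG.
have defH : H :=: <[g ^+ m]>.
  by rewrite (cycle_subgroupE (g := g)) ?og ?oH // -defG.
have cosetE C : generating_coset G H C ->
    exists2 a, coprime a m & C = [set g ^+ (m * k + a) | k : 'I_i].
  case/(generating_coset_cycle defG sHG) => a.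
  rewrite -divgS // oG oH => co_am ->.
  by exists a; rewrite // defH (rcoset_cycleX _ (n := i)) // orderE -defH.
have u_gt0 : 0 < u by rewrite divn_gt0 // dvdn_leq.
have order_coset a k :
    coprime a m -> #[g ^+ (m * k + a)] = j %/ gcdn v (m * k + a).
  move=> co_am; rewrite orderXgcd og {2}def_j gcdn_prime_support //.
  by rewrite /coprime gcdnC mulnC gcdnMDl gcdnC.
have dv_vj : v %| j := dvdn_trans dv_vi dv_ij.
split=> [C /cosetE [a co_am ->] _ /imsetP [k _ ->] |
         d dv_dv C /cosetE [a co_am ->]].
  by rewrite order_coset // (divn_chain (dvdn_gcdl _ _)) ?dvdn_mulr.
rewrite card_setId_imset; last first.
  by apply: expg_affine_inj => //; rewrite og def_j -mulnA divnK.
rewrite (eq_card (B := [set k : 'I_i | gcdn v (m * k + a) == v %/ d])) => [|k].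
  rewrite (card_ord_sum _ (fun k => gcdn v (m * k + a) == v %/ d)).
  by rewrite -(divnK dv_vi) sum_gcdn_affine_eq_totient.
by rewrite !inE order_coset // eqn_divn_swap ?dvdn_gcdl.
Qed.
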